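(* Let $a\geq3$ be an odd integer and let $\alpha\in A_a\cup B_a$. (1) If $\alpha\in A_{a-2}$, then the sequence of compatible orbits $\{\mathscr{O}_n((0,0),\alpha)\}_{n=0}^\infty$, where $\mathscr{O}_n((0,0),\alpha)$ is the orbit of the prefractal billiard table $\Omega(S_{a,n})$ with initial condition $((0,0),\alpha)$, is a sequence of compatible periodic orbits. (2) If $\alpha\in B_a$, $n_0\in\mathbb{N}$ and $r<2a^{n_0}$ is an odd positive integer, then the sequence of compatible orbits $\{\mathscr{O}_n((\tfrac{r}{2a^{n_0}},0),\alpha)\}_{n=0}^\infty$ of the tables $\Omega(S_{a,n})$ with initial condition $((\tfrac{r}{2a^{n_0}},0),\alpha)$ is a sequence of compatible periodic orbits. Furthermore, in each case the sequence of compatible periodic orbits is eventually constant, and its trivial limit (the common path of the orbits from some index on) constitutes a periodic orbit of the self-similar Sierpinski carpet billiard table $\Omega(S_a)$.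
   Context: Let $Q=[0,1]^2$. For odd $a\geq3$: $S_{a,0}=Q$, and $S_{a,n}$ is obtained from $S_{a,n-1}$ (a union of closed squares of side $a^{-(n-1)}$) by dividing each such square into $a^2$ subsquares of side $a^{-n}$ and removing the open middle one; $S_a=\bigcap_n S_{a,n}$. A peripheral square is the boundary of a removed open square. $A_b=\{\tfrac pq: p+q\leq b,\ 0\leq p<q\leq b-1,\ p,q\in\mathbb{N}\cup\{0\},\ p+q \text{ odd}\}$ and $B_b=\{\tfrac pq: p+q\leq b-1,\ 0\leq p\leq q\leq b-2,\ p,q\in\mathbb{N},\ p,q\text{ odd}\}$ for odd $b\ge3$, with $A_1=\{0\}$. The prefractal billiard table $\Omega(S_{a,n})$ is the region $S_{a,n}$ with boundary $\partial S_{a,n}$ (the boundary of $Q$ together with the peripheral squares of side $\geq a^{-n}$); a billiard ball moves in straight lines and reflects off the boundary with angle of reflection equal to angle of incidence. At a corner of $Q$ reflection is well defined (the ball exits reflected through the angle bisector); if the ball hits a corner of a peripheral square, the trajectory terminates there (the orbit is singular). An initial condition $(x^0,\alpha)$ consists of a boundary point $x^0$ and an inward direction of slope $\alpha$ (i.e. $\alpha=\tan\theta^0$); its orbit is the sequence of successive collision points with their outgoing directions. An orbit is closed if it has finitely many elements, and periodic if it is nonsingular and there is a least $m\geq1$ with the $m$-th iterate of the billiard map equal to the initial condition. Initial conditions $(x_n^0,\alpha)$ for $\Omega(S_{a,n})$ and $(x_m^0,\alpha)$ for $\Omega(S_{a,m})$, $n>m$, with the same slope are compatible if $x_n^0,x_m^0$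 lie on a segment of direction $\alpha$ meeting $\partial S_{a,n}$ only at $x_n^0$; a sequence of orbits $\{\mathscr{O}_n\}_{n\geq N}$ of $\Omega(S_{a,n})$ with pairwise compatible initial conditions is a sequence of compatible orbits, and it is a sequence of compatible periodic orbits if every $\mathscr{O}_n$ is periodic. It is constant if the path traversed by $\mathscr{O}_{n+1}$ equals that traversed by $\mathscr{O}_n$ for all $n\geq N$, and eventually constant if this holds from some index on. A periodic orbit of $\Omega(S_a)$ is understood, in this paper, as the trivial limit (common path) of an eventually constant sequence of compatible periodic orbits. *)

From Stdlib Require Import Reals Lra Arith.
Open Scope R_scope.

Definition pt := (R * R)%type.
(* a billiard state: (collision point, outgoing direction vector) *)
Definition state := (pt * pt)%type.

(* the middle digit c = (a-1)/2 for odd a *)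
Definition mid (a : nat) : nat := Nat.div2 a.

Definition digit (a d i : nat) : nat := Nat.modulo (Nat.div i (a ^ d)) a.

(* the closed cell [i/a^m,(i+1)/a^m] x [j/a^m,(j+1)/a^m] (i,j < a^m) is part
   of S_{a,m}, i.e. none of its ancestors (nor itself) is a removed middle square *)
Definition retained (a m i j : nat) : Prop :=
  forall d, (d < m)%nat -> ~ (digit a d i = mid a /\ digit a d j = mid a).

(* peripheral square of level k (side a^-k) removed from the retained cell
   (i,j) of level k-1; it belongs to the boundary of S_{a,n} iff 1 <= k <= n *)
Definition periph (a n k i j : nat) : Prop :=
  (1 <= k)%nat /\ (k <= n)%nat /\ (i < a ^ (k - 1))%nat /\ (j < a ^ (k - 1))%nat
  /\ retained a (k - 1) i j.

Definition side (a k : nat) : R := / (INR a ^ k).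
Definition llx (a k i : nat) : R := INR (a * i + mid a) * side a k.

(* horizontal / vertical sides of Q and of peripheral squares of level <= n *)
Definition on_hwall (a n : nat) (p : pt) : Prop :=
  ((snd p = 0 \/ snd p = 1) /\ 0 <= fst p <= 1) \/
  (exists k i j, periph a n k i j /\
     (snd p = llx a k j \/ snd p = llx a k j + side a k) /\
     llx a k i <= fst p <= llx a k i + side a k).

Definition on_vwall (a n : nat) (p : pt) : Prop :=
  ((fst p = 0 \/ fst p = 1) /\ 0 <= snd p <= 1) \/
  (exists k i j, periph a n k i j /\
     (fst p = llx a k i \/ fst p = llx a k i + side a k) /\
     llx a k j <= snd p <= llx a k j + side a k).

Definition on_boundary (a n : nat) (p : pt) : Prop := on_hwall a n p \/ on_vwall a n p.

Definition pcorner (a n : nat) (p : pt) : Prop :=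
  exists k i j, periph a n k i j /\
    (fst p = llx a k i \/ fst p = llx a k i + side a k) /\
    (snd p = llx a k j \/ snd p = llx a k j + side a k).

Definition move (x v : pt) (t : R) : pt := (fst x + t * fst v, snd x + t * snd v).

(* transversal collisions with walls *)
Definition hhit (a n : nat) (v y : pt) : Prop := snd v <> 0 /\ on_hwall a n y.
Definition vhit (a n : nat) (v y : pt) : Prop := fst v <> 0 /\ on_vwall a n y.
Definition hits (a n : nat) (x v : pt) (t : R) : Prop :=
  hhit a n v (move x v t) \/ vhit a n v (move x v t).

(* One application of the billiard map of Omega(S_{a,n}): travel in a straight
   line to the first collision with the boundary; reflect (angle of incidence =
   angle of reflection; at a corner of Q both components flip, i.e. the ball
   comes back along its path); undefined (orbit terminates) at a corner of a
   peripheral square. *)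
Definition step (a n : nat) (s s' : state) : Prop :=
  let (x, v) := s in let (y, w) := s' in
  exists t, 0 < t /\ hits a n x v t /\
    (forall t', 0 < t' < t -> ~ hits a n x v t') /\
    y = move x v t /\ ~ pcorner a n y /\
    (vhit a n v y -> fst w = - fst v) /\ (~ vhit a n v y -> fst w = fst v) /\
    (hhit a n v y -> snd w = - snd v) /\ (~ hhit a n v y -> snd w = snd v).

Fixpoint reach (a n k : nat) (s s' : state) : Prop :=
  match k with
  | O => s' = s
  | S k' => exists s1, reach a n k' s s1 /\ step a n s1 s'
  end.

Definition nonsingular (a n : nat) (s : state) : Prop :=
  forall k, exists s', reach a n k s s'.

Definition periodic (a n : nat) (s : state) : Prop :=
  nonsingular a n s /\
  exists m, (1 <= m)%nat /\ reach a n m s s /\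
    (forall k, (1 <= k)%nat -> (k < m)%nat -> ~ reach a n k s s).

Definition segment (p q : pt) (z : pt) : Prop :=
  exists l, 0 <= l <= 1 /\ z = ((1 - l) * fst p + l * fst q, (1 - l) * snd p + l * snd q).

Definition path (a n : nat) (s : state) : pt -> Prop :=
  fun z => exists k s1 s2, reach a n k s s1 /\ step a n s1 s2 /\ segment (fst s1) (fst s2) z.

Definition compatible (a n : nat) (xn xm v : pt) : Prop :=
  exists t, xn = move xm v t /\
    (forall z, segment xm xn z -> on_boundary a n z -> z = xn).

(* a periodic orbit of Omega(S_a): the trivial limit (common path) of an
   eventually constant sequence of compatible periodic orbits *)
Definition carpet_periodic_orbit (a : nat) (P : pt -> Prop) : Prop :=
  exists (N : nat) (x : nat -> pt) (v : pt),
    v <> (0, 0) /\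
    (forall n, (N <= n)%nat -> on_boundary a n (x n)) /\
    (forall n m, (N <= m)%nat -> (m < n)%nat -> compatible a n (x n) (x m) v) /\
    (forall n, (N <= n)%nat -> periodic a n (x n, v)) /\
    exists M, (N <= M)%nat /\
      (forall n, (M <= n)%nat -> path a (S n) (x (S n), v) = path a n (x n, v)) /\
      P = path a M (x M, v).

Definition inA (b : nat) (al : R) : Prop :=
  if Nat.eqb b 1 then al = 0 else
  exists p q : nat, (p + q <= b)%nat /\ (p < q)%nat /\ (q <= b - 1)%nat /\
    Nat.odd (p + q) = true /\ al = INR p / INR q.

Definition inB (b : nat) (al : R) : Prop :=
  exists p q : nat, (1 <= p)%nat /\ (1 <= q)%nat /\ (p + q <= b - 1)%nat /\
    (p <= q)%nat /\ (q <= b - 2)%nat /\ Nat.odd p = true /\ Nat.odd q = true /\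
    al = INR p / INR q.

Definition good_sequence (a : nat) (s : state) : Prop :=
  (forall n, periodic a n s) /\
  exists N, (forall n, (N <= n)%nat -> path a (S n) s = path a n s) /\
    carpet_periodic_orbit a (path a N s).

From Stdlib Require Import Reals Arith Lra Lia ZArith List Wf_nat FinFun Classical ClassicalEpsilon FunctionalExtensionality PropExtensionality.
Import ListNotations.
Open Scope R_scope.

(* The ball starts with direction (1, p/q) and keeps a direction (+-1, +-p/q).
   Along its line the integer index 2 a^n0 q (v1 y - v2 x) has a fixed parity,
   preserved by reflections in walls of level <= n0 (their coordinates lie in
   a^-n0 Z). Since p + q < a, a parity count shows that such a line never meets a
   closed peripheral square of level > n0, nor a corner of one of level <= n0.
   Hence for n >= n0 the orbit in S_{a,n} is that in S_{a,n0}, it never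
   terminates, and its collision states lie on a finite grid; the billiard map
   being injective on these states, every orbit is periodic. *)

Lemma least_nat (P : nat -> Prop) :
  (exists n, P n) -> exists n, P n /\ forall m, (m < n)%nat -> ~ P m.
Proof.
  intros HP.
  destruct (dec_inh_nat_subset_has_unique_least_element P (fun n => classic (P n)) HP)
    as [n [[Pn Hleast] _]].
  exists n. split; [exact Pn|]. intros m Hm Pm. specialize (Hleast m Pm). lia.
Qed.

Lemma pigeonhole_list (A : Type) (L : list A) (f : nat -> A) :
  (forall k, In (f k) L) -> exists i j, (i < j)%nat /\ f i = f j.
Proof.
  intros HL. apply NNPP. intro Hno.
  assert (Hinj : forall i j, f i = f j -> i = j).
  { intros i j e. destruct (lt_eq_lt_dec i j) as [[h|h]|h]; auto;
      exfalso; apply Hno; [exists i, j | exists j, i]; auto. }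
  set (ks := seq 0 (S (length L))).
  assert (Hnd : NoDup (map f ks)).
  { apply Injective_map_NoDup; [exact Hinj | apply seq_NoDup]. }
  assert (Hincl : incl (map f ks) L).
  { intros u hu. apply in_map_iff in hu. destruct hu as [k [<- _]]. apply HL. }
  pose proof (NoDup_incl_length Hnd Hincl) as Hlen.
  unfold ks in Hlen. rewrite length_map, length_seq in Hlen. lia.
Qed.

Lemma Z_odd_of_nat n : Z.odd (Z.of_nat n) = Nat.odd n.
Proof.
  induction n as [|n IH]; [reflexivity|].
  rewrite Nat2Z.inj_succ, Z.odd_succ, <- Z.negb_odd, IH, Nat.odd_succ, <- Nat.negb_odd.
  reflexivity.
Qed.

Lemma odd_pow_odd a m : Nat.odd a = true -> Nat.odd (a ^ m) = true.
Proof. intros H. destruct m as [|m]; [reflexivity|]. rewrite Nat.odd_pow; auto. Qed.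

Lemma INR_odd_mid a : Nat.odd a = true -> INR a = 2 * INR (mid a) + 1.
Proof.
  intros H. unfold mid. pose proof (Nat.div2_odd a) as E. rewrite H in E.
  rewrite E at 1. rewrite plus_INR, mult_INR. simpl. lra.
Qed.

Lemma IZR_odd_abs_ge1 (N : Z) : Z.odd N = true -> 1 <= IZR N \/ IZR N <= -1.
Proof.
  intros H. assert (N <> 0%Z) by (intros ->; discriminate).
  destruct (Z_le_gt_dec N (-1)) as [h|h].
  - right. exact (IZR_le _ _ h).
  - left. apply IZR_le. lia.
Qed.

Lemma exit_time_unit_interval (x u : R) : 0 <= x <= 1 -> u <> 0 ->
  (x = 0 -> 0 < u) -> (x = 1 -> u < 0) ->
  exists T, 0 < T /\ (x + T * u = 0 \/ x + T * u = 1) /\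
    forall t, 0 <= t <= T -> 0 <= x + t * u <= 1.
Proof.
  intros Hx Hu H0 H1.
  destruct (Rlt_dec 0 u) as [hu|hu].
  - assert (x < 1) by (destruct (Req_dec x 1) as [e|e]; [specialize (H1 e); lra | lra]).
    exists ((1 - x) / u). split; [apply Rdiv_lt_0_compat; lra|]. split.
    + right. field. lra.
    + intros t [ht1 ht2]. split; [nra|].
      apply Rmult_le_compat_r with (r := u) in ht2; [|lra].
      unfold Rdiv in ht2. rewrite Rmult_assoc, Rinv_l in ht2 by lra. lra.
  - assert (u < 0) by lra.
    assert (0 < x) by (destruct (Req_dec x 0) as [e|e]; [specialize (H0 e); lra | lra]).
    exists (- x / u). split.
    + replace (- x / u) with (x / (- u)) by (field; lra). apply Rdiv_lt_0_compat; lra.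
    + split; [left; field; lra|].
      intros t [ht1 ht2]. split; [|nra].
      apply Rmult_le_compat_r with (r := - u) in ht2; [|lra].
      assert (- x / u * - u = x) by (field; lra). nra.
Qed.

Lemma cell_coordinate a k i c : (0 < a)%nat ->
  llx a k i <= c <= llx a k i + side a k ->
  0 <= c * INR a ^ k - INR (a * i + mid a) <= 1.
Proof.
  unfold llx, side. intros Ha [h1 h2].
  assert (HAk : 0 < INR a ^ k) by exact (pow_lt _ k (lt_0_INR _ Ha)).
  apply Rmult_le_compat_r with (r := INR a ^ k) in h1, h2; try lra.
  rewrite Rmult_assoc, Rinv_l in h1 by lra.
  rewrite Rmult_plus_distr_r, Rmult_assoc, Rinv_l in h2 by lra. lra.
Qed.

Lemma move_0 x v : move x v 0 = x.
Proof. destruct x as [x1 x2]. unfold move. cbn [fst snd]. f_equal; ring. Qed.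

Lemma move_shift x x' v t t' : move x v t = move x' v t' -> x = move x' v (t' - t).
Proof.
  destruct x as [x1 x2], x' as [x1' x2']. unfold move. cbn [fst snd].
  intros E. injection E as E1 E2. f_equal; lra.
Qed.

Definition reflected (a n : nat) (v y w : pt) : Prop :=
  (vhit a n v y -> fst w = - fst v) /\ (~ vhit a n v y -> fst w = fst v) /\
  (hhit a n v y -> snd w = - snd v) /\ (~ hhit a n v y -> snd w = snd v).

Definition reflect_dir (a n : nat) (v y : pt) : pt :=
  (if excluded_middle_informative (vhit a n v y) then - fst v else fst v,
   if excluded_middle_informative (hhit a n v y) then - snd v else snd v).

Lemma reflected_reflect_dir a n v y : reflected a n v y (reflect_dir a n v y).
Proof.
  unfold reflected, reflect_dir. cbn [fst snd].
  destruct (excluded_middle_informative (vhit a n v y));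
  destruct (excluded_middle_informative (hhit a n v y)); tauto.
Qed.

Lemma reflected_functional a n v y w w' :
  reflected a n v y w -> reflected a n v y w' -> w = w'.
Proof.
  intros [V [V' [H H']]] [U [U' [G G']]]. destruct w as [w1 w2], w' as [w1' w2'].
  cbn [fst snd] in *. f_equal.
  - destruct (classic (vhit a n v y)) as [h|h]; [rewrite V, U | rewrite V', U']; auto.
  - destruct (classic (hhit a n v y)) as [h|h]; [rewrite H, G | rewrite H', G']; auto.
Qed.

Lemma reflected_injective a n v v' y w : fst v <> 0 -> fst v' <> 0 ->
  (snd v = 0 <-> snd v' = 0) -> reflected a n v y w -> reflected a n v' y w -> v = v'.
Proof.
  unfold reflected, vhit, hhit. intros Hv Hv' Hs [V [V' [H H']]] [U [U' [G G']]].
  destruct v as [v1 v2], v' as [v1' v2']. cbn [fst snd] in *. f_equal.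
  - destruct (classic (on_vwall a n y)) as [h|h].
    + pose proof (V (conj Hv h)). pose proof (U (conj Hv' h)). lra.
    + rewrite V', U' in * by tauto. congruence.
  - destruct (classic (on_hwall a n y)) as [h|h].
    + destruct (Req_dec v2 0) as [h0|h0].
      * rewrite H', G' in * by tauto. congruence.
      * assert (h0' : v2' <> 0) by tauto.
        pose proof (H (conj h0 h)). pose proof (G (conj h0' h)). lra.
    + rewrite H', G' in * by tauto. congruence.
Qed.

Section BilliardMap.

Variables a n : nat.

Lemma step_functional s s1 s2 : step a n s s1 -> step a n s s2 -> s1 = s2.
Proof.
  destruct s as [x v], s1 as [y1 w1], s2 as [y2 w2]. simpl.
  intros [t1 [pos1 [hit1 [first1 [-> [_ R1]]]]]] [t2 [pos2 [hit2 [first2 [-> [_ R2]]]]]].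
  assert (t1 = t2) as <-.
  { destruct (Rtotal_order t1 t2) as [h|[h|h]]; [exfalso | exact h | exfalso].
    - exact (first2 t1 (conj pos1 h) hit1).
    - exact (first1 t2 (conj pos2 h) hit2). }
  rewrite (reflected_functional a n v _ w1 w2 R1 R2). reflexivity.
Qed.

Lemma reach_functional k s s1 s2 : reach a n k s s1 -> reach a n k s s2 -> s1 = s2.
Proof.
  revert s1 s2. induction k as [|k IH]; simpl; intros s1 s2.
  - congruence.
  - intros [u1 [r1 t1]] [u2 [r2 t2]].
    rewrite (IH _ _ r1 r2) in t1. exact (step_functional _ _ _ t1 t2).
Qed.

Lemma reach_succ_step k s s0 s1 :
  reach a n k s s0 -> reach a n (S k) s s1 -> step a n s0 s1.
Proof. intros r0 [u [r t]]. rewrite (reach_functional _ _ _ _ r0 r). exact t. Qed.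

Variable I : state -> Prop.
Hypothesis I_closed : forall s s', I s -> step a n s s' -> I s'.

Lemma reach_closed k s s' : I s -> reach a n k s s' -> I s'.
Proof.
  intros Is. revert s'. induction k as [|k IH]; simpl; intros s'.
  - intros ->. exact Is.
  - intros [s1 [r t]]. exact (I_closed _ _ (IH _ r) t).
Qed.

Hypothesis I_total : forall s, I s -> exists s', step a n s s'.
Hypothesis I_injective :
  forall s1 s2 s', I s1 -> I s2 -> step a n s1 s' -> step a n s2 s' -> s1 = s2.
Variable L : list state.
Hypothesis I_finite : forall s, I s -> In s L.

Lemma nonsingular_of_closed s : I s -> nonsingular a n s.
Proof.
  intros Is k. induction k as [|k [s1 r]].
  - exists s. reflexivity.
  - destruct (I_total _ (reach_closed _ _ _ Is r)) as [s2 t].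
    exists s2, s1. auto.
Qed.

Lemma periodic_of_closed s : I s -> periodic a n s.
Proof.
  intros Is. pose proof (nonsingular_of_closed s Is) as Hns.
  split; [exact Hns|].
  set (f := fun k => proj1_sig (constructive_indefinite_description _ (Hns k))).
  assert (Hf : forall k, reach a n k s (f k)) by (intro k; exact (proj2_sig _)).
  assert (HfI : forall k, I (f k)) by (intro k; exact (reach_closed _ _ _ Is (Hf k))).
  destruct (pigeonhole_list _ L f (fun k => I_finite _ (HfI k))) as [i [j [hij eij]]].
  (* Injectivity pulls a repetition [f i = f j] back to the initial state. *)
  assert (Hshift : forall i j, (i <= j)%nat -> f i = f j -> f 0%nat = f (j - i)%nat).
  { clear i j hij eij. induction i as [|i IH]; intros j hij e.
    - rewrite Nat.sub_0_r. exact e.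
    - destruct j as [|j]; [lia|]. rewrite Nat.sub_succ. apply IH; [lia|].
      apply (I_injective _ _ (f (S i)) (HfI i) (HfI j)).
      + exact (reach_succ_step _ _ _ _ (Hf i) (Hf (S i))).
      + rewrite e. exact (reach_succ_step _ _ _ _ (Hf j) (Hf (S j))). }
  assert (Hret : exists m, (1 <= m)%nat /\ reach a n m s s).
  { exists (j - i)%nat. split; [lia|].
    assert (E0 : f 0%nat = s) by exact (Hf 0%nat).
    rewrite <- E0 at 2. rewrite (Hshift i j) by (auto; lia). apply Hf. }
  destruct (least_nat _ Hret) as [m [[hm r] hmin]].
  exists m. split; [exact hm|]. split; [exact r|].
  intros k hk1 hk2 rk. exact (hmin k hk2 (conj hk1 rk)).
Qed.

End BilliardMap.

Section StablePath.

Variables a n : nat.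
Variable I : state -> Prop.
Hypothesis I_closed : forall s s', I s -> step a n s s' -> I s'.
Hypothesis step_succ_agree : forall s s', I s -> (step a (S n) s s' <-> step a n s s').

Lemma reach_succ_iff s : I s -> forall k s', reach a (S n) k s s' <-> reach a n k s s'.
Proof.
  intros Is k. induction k as [|k IH]; intro s'; simpl; [tauto|].
  split; intros [s1 [r t]]; exists s1.
  - apply IH in r. split; [exact r|].
    apply step_succ_agree; [exact (reach_closed _ _ _ I_closed _ _ _ Is r) | exact t].
  - split; [apply IH; exact r|].
    apply step_succ_agree; [exact (reach_closed _ _ _ I_closed _ _ _ Is r) | exact t].
Qed.

Lemma path_succ_eq s : I s -> path a (S n) s = path a n s.
Proof.
  intros Is. apply functional_extensionality. intro z.
  apply propositional_extensionality. unfold path.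
  split; intros [k [s1 [s2 [r [t sg]]]]]; exists k, s1, s2.
  - apply (reach_succ_iff _ Is) in r.
    split; [exact r|]. split; [|exact sg].
    apply step_succ_agree; [exact (reach_closed _ _ _ I_closed _ _ _ Is r) | exact t].
  - split; [apply (reach_succ_iff _ Is); exact r|]. split; [|exact sg].
    apply step_succ_agree; [exact (reach_closed _ _ _ I_closed _ _ _ Is r) | exact t].
Qed.

End StablePath.

Lemma good_sequence_of_stable a (s : state) N :
  snd s <> (0, 0) -> (forall n, on_boundary a n (fst s)) ->
  (forall n, periodic a n s) -> (forall n, (N <= n)%nat -> path a (S n) s = path a n s) ->
  good_sequence a s.
Proof.
  destruct s as [x v]. cbn [fst snd]. intros Hv Hb Hper Hpath.
  split; [exact Hper|]. exists N. split; [exact Hpath|].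
  exists N, (fun _ => x), v. split; [exact Hv|]. split; [intros n _; apply Hb|].
  split.
  - intros n m _ _. exists 0. split; [symmetry; apply move_0|].
    intros z [l [_ ->]] _. destruct x as [x1 x2]. cbn [fst snd]. f_equal; ring.
  - split; [intros n _; apply Hper|].
    exists N. split; [lia|]. split; [intros n hn; apply Hpath; lia | reflexivity].
Qed.

Section LatticeLine.

Variables a p q n0 : nat.
Variable md : bool.
Hypothesis a_odd : Nat.odd a = true.
Hypothesis q_pos : (1 <= q)%nat.
Hypothesis pq_lt_a : (p + q < a)%nat.
(* [md] is the parity of the line index: for slopes in A_{a-2} the orbit starts
   at the origin (index 0, and n0 = 0), for slopes in B_a at an odd multiple of
   1/(2 a^n0) on the bottom side (odd index). *)
Hypothesis parity : Nat.odd (p + q) = negb md.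
Hypothesis corner_parity : md = true \/ n0 = 0%nat.

Lemma a_pos : (0 < a)%nat.
Proof. exact (Nat.le_lt_trans _ _ _ (Nat.le_0_l (p + q)) pq_lt_a). Qed.

Lemma INR_a_pos : 0 < INR a.
Proof. exact (lt_0_INR _ a_pos). Qed.

Lemma INR_q_pos : 0 < INR q.
Proof. exact (lt_0_INR _ q_pos). Qed.

Lemma side_pos k : 0 < side a k.
Proof. apply Rinv_0_lt_compat, pow_lt, INR_a_pos. Qed.

Definition slope : R := INR p / INR q.

(* The ball moves on a line [v1 y - v2 x = const]; this index is the constant,
   scaled so that it is an integer on the lines considered. *)
Definition line_index (x v : pt) : R :=
  2 * INR a ^ n0 * INR q * (fst v * snd x - snd v * fst x).

Definition admissible (x v : pt) : Prop :=
  exists e1 e2 z : Z, (e1 = 1 \/ e1 = -1)%Z /\ (e2 = 1 \/ e2 = -1)%Z /\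
    v = (IZR e1, IZR e2 * slope) /\ Z.odd z = md /\ line_index x v = IZR z.

Lemma admissible_move x v t : admissible x v -> admissible (move x v t) v.
Proof.
  intros [e1 [e2 [z [H1 [H2 [H3 [H4 H5]]]]]]]. exists e1, e2, z. repeat split; auto.
  rewrite <- H5. unfold line_index, move. simpl. ring.
Qed.

Lemma admissible_dir x v : admissible x v -> fst v <> 0 /\ (snd v = 0 <-> slope = 0).
Proof.
  intros [e1 [e2 [z [H1 [H2 [-> _]]]]]]. cbn [fst snd].
  split.
  - destruct H1 as [-> | ->]; simpl; lra.
  - destruct H2 as [-> | ->]; simpl; split; intro; lra.
Qed.

Lemma slope_nonneg : 0 <= slope.
Proof.
  unfold slope. pose proof INR_q_pos. pose proof (pos_INR p).
  apply Rmult_le_pos; [lra | left; apply Rinv_0_lt_compat; lra].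
Qed.

Lemma p_pos_of_slope : slope <> 0 -> (1 <= p)%nat.
Proof.
  unfold slope. intros H. destruct p; [|lia]. exfalso. apply H. unfold Rdiv. simpl. ring.
Qed.

(* In the coordinates [u1, u2] in [0,1] of a peripheral square of level [k > n0],
   the index equation becomes [N a = -(e1 q (2 u2 - 1) - e2 p (2 u1 - 1))] with [N]
   odd, which is impossible since [p + q < a]. *)
Lemma admissible_misses_deep_square k i j y v : admissible y v -> (n0 < k)%nat ->
  llx a k i <= fst y <= llx a k i + side a k ->
  llx a k j <= snd y <= llx a k j + side a k -> False.
Proof.
  intros [e1 [e2 [z [He1 [He2 [-> [Hz HL]]]]]]] Hk Hb1 Hb2.
  pose proof (cell_coordinate a k i (fst y) a_pos Hb1) as Hu1.
  pose proof (cell_coordinate a k j (snd y) a_pos Hb2) as Hu2.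
  unfold line_index, slope in HL. cbn [fst snd] in HL.
  set (A := INR a) in *.
  assert (HA : A = 2 * INR (mid a) + 1) by exact (INR_odd_mid a a_odd).
  assert (Hpqr : INR p + INR q + 1 <= A)
    by (unfold A; rewrite <- plus_INR, <- S_INR; apply le_INR; lia).
  pose proof INR_q_pos as Hq.
  pose proof (pos_INR p) as Hp.
  set (m := (k - 1 - n0)%nat).
  assert (HAk : A ^ k = A ^ n0 * A * A ^ m)
    by (replace k with (n0 + 1 + m)%nat by (unfold m; lia); rewrite !pow_add; ring).
  set (u1 := fst y * A ^ k - INR (a * i + mid a)) in *.
  set (u2 := snd y * A ^ k - INR (a * j + mid a)) in *.
  set (N := (e1 * Z.of_nat q * (2 * Z.of_nat j + 1) - e2 * Z.of_nat p * (2 * Z.of_nat i + 1)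
             - Z.of_nat (a ^ m) * z)%Z).
  assert (HN : IZR N * A = - (IZR e1 * INR q * (2 * u2 - 1) - IZR e2 * INR p * (2 * u1 - 1))).
  { unfold N. rewrite !minus_IZR, !mult_IZR, !plus_IZR, !mult_IZR.
    rewrite <- !INR_IZR_INZ, pow_INR. fold A.
    rewrite <- HL. unfold u1, u2. rewrite HAk, !plus_INR, !mult_INR. fold A.
    replace (INR (mid a)) with ((A - 1) / 2) by lra.
    field. lra. }
  assert (HNodd : Z.odd N = true).
  { assert (Ho1 : Z.odd e1 = true) by (destruct He1 as [-> | ->]; reflexivity).
    assert (Ho2 : Z.odd e2 = true) by (destruct He2 as [-> | ->]; reflexivity).
    unfold N. rewrite !Z.odd_sub, !Z.odd_mul, !Z.odd_add, !Z.odd_mul, !Z_odd_of_nat, Hz,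
      (odd_pow_odd a m a_odd), Ho1, Ho2.
    rewrite Nat.odd_add in parity.
    destruct (Nat.odd p), (Nat.odd q), md; simpl in *; congruence. }
  assert (Hbnd : - (INR q + INR p) <= IZR N * A <= INR q + INR p).
  { rewrite HN. destruct He1 as [-> | ->]; destruct He2 as [-> | ->]; simpl; split; nra. }
  destruct (IZR_odd_abs_ge1 N HNodd); nra.
Qed.

Lemma wall_coord_scaled k i (w : R) : (k <= n0)%nat ->
  (w = llx a k i \/ w = llx a k i + side a k) -> exists m : Z, w * INR a ^ n0 = IZR m.
Proof.
  intros Hk Hw. pose proof INR_a_pos.
  assert (E : INR a ^ n0 = INR a ^ k * INR a ^ (n0 - k))
    by (rewrite <- pow_add; f_equal; lia).
  assert (HAk : INR a ^ k <> 0) by (apply pow_nonzero; lra).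
  destruct Hw as [-> | ->]; unfold llx, side.
  - exists (Z.of_nat ((a * i + mid a) * a ^ (n0 - k))).
    rewrite <- INR_IZR_INZ, mult_INR, pow_INR, E. field. exact HAk.
  - exists (Z.of_nat ((a * i + mid a + 1) * a ^ (n0 - k))).
    rewrite <- INR_IZR_INZ, mult_INR, pow_INR, E, !plus_INR. simpl INR. field. exact HAk.
Qed.

Lemma vwall_coord_scaled n y v : admissible y v -> on_vwall a n y ->
  exists m : Z, fst y * INR a ^ n0 = IZR m.
Proof.
  intros Hy [[[-> | ->] _] | [k [i [j [_ [Hx Hyj]]]]]].
  - exists 0%Z. simpl. ring.
  - exists (Z.of_nat (a ^ n0)). rewrite <- INR_IZR_INZ, pow_INR. ring.
  - destruct (le_lt_dec k n0) as [h|h].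
    + exact (wall_coord_scaled k i _ h Hx).
    + exfalso. apply (admissible_misses_deep_square k i j y v Hy h); auto.
      pose proof (side_pos k). destruct Hx as [-> | ->]; lra.
Qed.

Lemma hwall_coord_scaled n y v : admissible y v -> on_hwall a n y ->
  exists m : Z, snd y * INR a ^ n0 = IZR m.
Proof.
  intros Hy [[[-> | ->] _] | [k [i [j [_ [Hyj Hx]]]]]].
  - exists 0%Z. simpl. ring.
  - exists (Z.of_nat (a ^ n0)). rewrite <- INR_IZR_INZ, pow_INR. ring.
  - destruct (le_lt_dec k n0) as [h|h].
    + exact (wall_coord_scaled k j _ h Hyj).
    + exfalso. apply (admissible_misses_deep_square k i j y v Hy h); auto.
      pose proof (side_pos k). destruct Hyj as [-> | ->]; lra.
Qed.

(* At a corner of level [<= n0] both coordinates lie in [a^-n0 Z], making the index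
   even; for an even index [n0 = 0], and there are no such corners. *)
Lemma admissible_not_pcorner n y v : admissible y v -> ~ pcorner a n y.
Proof.
  intros Hy [k [i [j [[Hk1 _] [Hx Hyj]]]]].
  pose proof (side_pos k).
  destruct (le_lt_dec k n0) as [h|h].
  - destruct corner_parity as [Hmd | Hn0]; [|lia].
    destruct (wall_coord_scaled k i _ h Hx) as [m1 Hm1].
    destruct (wall_coord_scaled k j _ h Hyj) as [m2 Hm2].
    destruct Hy as [e1 [e2 [z [_ [_ [-> [Hz HL]]]]]]].
    assert (Ez : z = (2 * (e1 * Z.of_nat q * m2 - e2 * Z.of_nat p * m1))%Z).
    { apply eq_IZR. rewrite <- HL. unfold line_index, slope. cbn [fst snd].
      rewrite mult_IZR, minus_IZR, !mult_IZR, <- !INR_IZR_INZ, <- Hm1, <- Hm2.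
      field. pose proof INR_q_pos. lra. }
    rewrite Ez, Z.odd_mul, Hmd in Hz. discriminate.
  - apply (admissible_misses_deep_square k i j y v Hy h).
    + destruct Hx as [-> | ->]; lra.
    + destruct Hyj as [-> | ->]; lra.
Qed.

Lemma admissible_reflect_v n y v : admissible y v -> on_vwall a n y ->
  admissible y (- fst v, snd v).
Proof.
  intros Hy Hw. destruct (vwall_coord_scaled n y v Hy Hw) as [m Hm].
  destruct Hy as [e1 [e2 [z [H1 [H2 [-> [H4 H5]]]]]]].
  exists (- e1)%Z, e2, (- z - 4 * e2 * Z.of_nat p * m)%Z. cbn [fst snd].
  repeat split.
  - lia.
  - exact H2.
  - rewrite opp_IZR. reflexivity.
  - rewrite Z.odd_sub, Z.odd_opp, !Z.odd_mul. simpl. rewrite H4. destruct md; reflexivity.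
  - rewrite minus_IZR, opp_IZR, !mult_IZR, <- H5, <- Hm, <- INR_IZR_INZ.
    unfold line_index, slope. cbn [fst snd]. field. pose proof INR_q_pos. lra.
Qed.

Lemma admissible_reflect_h n y v : admissible y v -> on_hwall a n y ->
  admissible y (fst v, - snd v).
Proof.
  intros Hy Hw. destruct (hwall_coord_scaled n y v Hy Hw) as [m Hm].
  destruct Hy as [e1 [e2 [z [H1 [H2 [-> [H4 H5]]]]]]].
  exists e1, (- e2)%Z, (- z + 4 * e1 * Z.of_nat q * m)%Z. cbn [fst snd].
  repeat split.
  - exact H1.
  - lia.
  - rewrite opp_IZR. f_equal; ring.
  - rewrite Z.odd_add, Z.odd_opp, !Z.odd_mul. simpl. rewrite H4. destruct md; reflexivity.
  - rewrite plus_IZR, opp_IZR, !mult_IZR, <- H5, <- Hm, <- INR_IZR_INZ.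
    unfold line_index, slope. cbn [fst snd]. field. pose proof INR_q_pos. lra.
Qed.

(* Collision points lie on the grid (1/grid) Z^2: the wall coordinate is in
   a^-n0 Z and the index determines the other one. *)
Definition grid : nat := 2 * Nat.max p 1 * q * a ^ n0.

Lemma INR_grid : INR grid = 2 * INR (Nat.max p 1) * INR q * INR a ^ n0.
Proof. unfold grid. rewrite !mult_INR, pow_INR. reflexivity. Qed.

Lemma INR_max_p_pos : 0 < INR (Nat.max p 1).
Proof. exact (lt_0_INR _ (Nat.le_max_r p 1)). Qed.

Lemma grid_pos : 0 < INR grid.
Proof.
  rewrite INR_grid. pose proof INR_max_p_pos. pose proof INR_q_pos.
  pose proof (pow_lt _ n0 INR_a_pos). repeat apply Rmult_lt_0_compat; lra.
Qed.

Definition on_grid (x : pt) : Prop :=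
  exists z1 z2 : Z, fst x * INR grid = IZR z1 /\ snd x * INR grid = IZR z2.

Lemma vwall_point_on_grid n y v : admissible y v -> on_vwall a n y -> on_grid y.
Proof.
  intros Hy Hw. destruct (vwall_coord_scaled n y v Hy Hw) as [m Hm].
  destruct Hy as [e1 [e2 [z [H1 [H2 [-> [H4 H5]]]]]]].
  set (P := Z.of_nat (Nat.max p 1)).
  exists (2 * P * Z.of_nat q * m)%Z, (P * e1 * (z + 2 * e2 * Z.of_nat p * m))%Z.
  rewrite INR_grid. unfold line_index, slope in *. cbn [fst snd] in *. unfold P.
  split.
  - rewrite !mult_IZR, <- !INR_IZR_INZ, <- Hm. ring.
  - rewrite !mult_IZR, plus_IZR, !mult_IZR, <- !INR_IZR_INZ, <- Hm, <- H5.
    pose proof INR_q_pos. destruct H1 as [-> | ->]; simpl; field; lra.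
Qed.

Lemma hwall_point_on_grid n y v : admissible y v -> on_hwall a n y -> snd v <> 0 ->
  on_grid y.
Proof.
  intros Hy Hw Hs. destruct (hwall_coord_scaled n y v Hy Hw) as [m Hm].
  assert (Ep : Nat.max p 1 = p).
  { enough (1 <= p)%nat by lia. apply p_pos_of_slope.
    intro h. apply Hs. apply (admissible_dir y v Hy). exact h. }
  destruct Hy as [e1 [e2 [z [H1 [H2 [-> [H4 H5]]]]]]].
  exists (Z.of_nat q * e2 * (2 * Z.of_nat q * e1 * m - z))%Z, (2 * Z.of_nat p * Z.of_nat q * m)%Z.
  rewrite INR_grid, Ep. unfold line_index, slope in *. cbn [fst snd] in *.
  split.
  - rewrite !mult_IZR, minus_IZR, !mult_IZR, <- !INR_IZR_INZ, <- Hm, <- H5.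
    pose proof INR_q_pos.
    destruct H2 as [-> | ->]; destruct H1 as [-> | ->]; simpl; field; lra.
  - rewrite !mult_IZR, <- !INR_IZR_INZ, <- Hm. ring.
Qed.

Lemma hit_point_on_grid n y v : admissible y v -> hhit a n v y \/ vhit a n v y -> on_grid y.
Proof.
  intros Hy [[Hs Hw] | [_ Hw]].
  - exact (hwall_point_on_grid n y v Hy Hw Hs).
  - exact (vwall_point_on_grid n y v Hy Hw).
Qed.

Lemma admissible_reflected n y v w : admissible y v -> hhit a n v y \/ vhit a n v y ->
  reflected a n v y w -> admissible y w.
Proof.
  intros Hy Hhit [V [V' [H H']]]. destruct w as [w1 w2]. cbn [fst snd] in *.
  destruct (classic (vhit a n v y)) as [hv|hv]; destruct (classic (hhit a n v y)) as [hh|hh].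
  - rewrite (V hv), (H hh).
    exact (admissible_reflect_h n y _ (admissible_reflect_v n y v Hy (proj2 hv)) (proj2 hh)).
  - rewrite (V hv), (H' hh). exact (admissible_reflect_v n y v Hy (proj2 hv)).
  - rewrite (V' hv), (H hh). exact (admissible_reflect_h n y v Hy (proj2 hh)).
  - exfalso. tauto.
Qed.

Record billiard_state (n : nat) (x v : pt) : Prop := {
  bs_admissible : admissible x v;
  bs_x : 0 <= fst x <= 1;
  bs_y : 0 <= snd x <= 1;
  bs_left : fst x = 0 -> 0 < fst v;
  bs_right : fst x = 1 -> fst v < 0;
  bs_bottom : snd x = 0 -> 0 <= snd v;
  bs_top : snd x = 1 -> snd v <= 0;
  bs_grid : on_grid x;
  bs_wall : hhit a n v x \/ vhit a n v x }.

Lemma exit_time n x v : billiard_state n x v ->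
  exists T, 0 < T /\ hits a n x v T /\
    forall t, 0 <= t <= T -> 0 <= fst (move x v t) <= 1 /\ 0 <= snd (move x v t) <= 1.
Proof.
  intros [HO Hx1 Hx2 Hl Hr Hb Ht _ _].
  destruct (admissible_dir x v HO) as [Hv1 _].
  destruct (exit_time_unit_interval (fst x) (fst v) Hx1 Hv1 Hl Hr) as [T1 [HT1 [HT1b HT1r]]].
  unfold hits, hhit, vhit, move, on_hwall, on_vwall. cbn [fst snd].
  destruct (Req_dec (snd v) 0) as [h0|h0].
  - exists T1. rewrite h0, Rmult_0_r, Rplus_0_r. split; [exact HT1|]. split.
    + right. split; [exact Hv1|]. left. split; [exact HT1b | exact Hx2].
    + intros t ht. rewrite Rmult_0_r, Rplus_0_r. split; [apply HT1r; exact ht | exact Hx2].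
  - assert (Hb' : snd x = 0 -> 0 < snd v) by (intro e; specialize (Hb e); lra).
    assert (Ht' : snd x = 1 -> snd v < 0) by (intro e; specialize (Ht e); lra).
    destruct (exit_time_unit_interval (snd x) (snd v) Hx2 h0 Hb' Ht')
      as [T2 [HT2 [HT2b HT2r]]].
    destruct (Rle_dec T1 T2) as [hl|hl].
    + exists T1. split; [exact HT1|]. split.
      * right. split; [exact Hv1|]. left. split; [exact HT1b|]. apply HT2r. lra.
      * intros t ht. split; [apply HT1r | apply HT2r]; lra.
    + exists T2. split; [exact HT2|]. split.
      * left. split; [exact h0|]. left. split; [exact HT2b|]. apply HT1r. lra.
      * intros t ht. split; [apply HT1r | apply HT2r]; lra.
Qed.

Definition time_unit : R := INR grid * INR (Nat.max p 1).

Lemma time_unit_pos : 0 < time_unit.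
Proof. pose proof grid_pos. pose proof INR_max_p_pos. apply Rmult_lt_0_compat; lra. Qed.

(* Discreteness of hit times is what guarantees a first collision. *)
Lemma hit_time_discrete n x v t : billiard_state n x v -> 0 < t -> hits a n x v t ->
  exists m : nat, t * time_unit = INR m.
Proof.
  intros [HO _ _ _ _ _ _ [z1 [z2 [Hz1 Hz2]]] _] Ht Hh.
  pose proof (admissible_move x v t HO) as HO'.
  cut (exists w : Z, t * time_unit = IZR w).
  { intros [w Hw]. exists (Z.to_nat w).
    assert (0 < IZR w) by (rewrite <- Hw; pose proof time_unit_pos; nra).
    apply lt_IZR in H. rewrite INR_IZR_INZ, Z2Nat.id by lia. exact Hw. }
  unfold time_unit in *. rewrite INR_grid in *.
  destruct Hh as [[Hs Hw] | [Hs Hw]].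
  - destruct (hwall_coord_scaled n _ v HO' Hw) as [m Hm].
    assert (Ep : Nat.max p 1 = p).
    { enough (1 <= p)%nat by lia. apply p_pos_of_slope.
      intro h. apply Hs. apply (admissible_dir x v HO). exact h. }
    destruct HO as [e1 [e2 [z [H1 [H2 [-> [H4 H5]]]]]]].
    unfold move, slope in *. cbn [fst snd] in *. rewrite Ep in *.
    exists (e2 * Z.of_nat q * (2 * Z.of_nat p * Z.of_nat q * m - z2))%Z.
    rewrite !mult_IZR, minus_IZR, !mult_IZR, <- !INR_IZR_INZ, <- Hm, <- Hz2.
    pose proof INR_q_pos. destruct H2 as [-> | ->]; simpl; field; lra.
  - destruct (vwall_coord_scaled n _ v HO' Hw) as [m Hm].
    destruct HO as [e1 [e2 [z [H1 [H2 [-> [H4 H5]]]]]]].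
    unfold move, slope in *. cbn [fst snd] in *.
    set (P := Z.of_nat (Nat.max p 1)).
    exists (e1 * P * (2 * P * Z.of_nat q * m - z1))%Z.
    unfold P. rewrite !mult_IZR, minus_IZR, !mult_IZR, <- !INR_IZR_INZ, <- Hm, <- Hz1.
    destruct H1 as [-> | ->]; simpl; ring.
Qed.

Lemma first_hit_time n x v : billiard_state n x v ->
  exists t, 0 < t /\ hits a n x v t /\ (forall t', 0 < t' < t -> ~ hits a n x v t') /\
    0 <= fst (move x v t) <= 1 /\ 0 <= snd (move x v t) <= 1.
Proof.
  intros Hs. pose proof time_unit_pos as HK.
  destruct (exit_time n x v Hs) as [T [HT [HTh HTr]]].
  set (P := fun m : nat => 0 < INR m / time_unit /\ hits a n x v (INR m / time_unit)).
  assert (HP : exists m, P m).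
  { destruct (hit_time_discrete n x v T Hs HT HTh) as [m Hm]. exists m. unfold P.
    replace (INR m / time_unit) with T by (rewrite <- Hm; field; lra). auto. }
  destruct (least_nat P HP) as [m0 [[Ht Hth] Hmin]].
  set (t := INR m0 / time_unit) in *.
  assert (Hfirst : forall t', 0 < t' < t -> ~ hits a n x v t').
  { intros t' [h1 h2] hh. destruct (hit_time_discrete n x v t' Hs h1 hh) as [m Hm].
    apply (Hmin m).
    - apply INR_lt. rewrite <- Hm. unfold t in h2.
      apply Rmult_lt_compat_r with (r := time_unit) in h2; [|lra].
      unfold Rdiv in h2. rewrite Rmult_assoc, Rinv_l in h2 by lra. lra.
    - unfold P. replace (INR m / time_unit) with t' by (rewrite <- Hm; field; lra). auto. }
  assert (HtT : t <= T).
  { destruct (Rle_dec t T) as [h|h]; [exact h|]. exfalso. apply (Hfirst T); [lra | exact HTh]. }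
  exists t. split; [exact Ht|]. split; [exact Hth|]. split; [exact Hfirst|]. apply HTr. lra.
Qed.

Lemma billiard_state_after_hit n x v t w : billiard_state n x v -> 0 < t ->
  hits a n x v t -> 0 <= fst (move x v t) <= 1 -> 0 <= snd (move x v t) <= 1 ->
  reflected a n v (move x v t) w -> billiard_state n (move x v t) w.
Proof.
  intros Hs Ht Hh Hy1 Hy2 Hrefl.
  pose proof (admissible_move x v t (bs_admissible _ _ _ Hs)) as Hy.
  pose proof (bs_x _ _ _ Hs) as Hx1. pose proof (bs_y _ _ _ Hs) as Hx2.
  destruct (admissible_dir x v (bs_admissible _ _ _ Hs)) as [Hv1 _].
  pose proof Hrefl as [V [V' [H H']]].
  set (y := move x v t) in *.
  assert (Ey1 : fst y = fst x + t * fst v) by reflexivity.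
  assert (Ey2 : snd y = snd x + t * snd v) by reflexivity.
  assert (Hside_v : fst y = 0 \/ fst y = 1 -> vhit a n v y)
    by (intro e; split; [exact Hv1 | left; split; assumption]).
  assert (Hside_h : snd v <> 0 -> snd y = 0 \/ snd y = 1 -> hhit a n v y)
    by (intros h0 e; split; [exact h0 | left; split; assumption]).
  constructor.
  - exact (admissible_reflected n y v w Hy Hh Hrefl).
  - exact Hy1.
  - exact Hy2.
  - intro e. rewrite (V (Hside_v (or_introl e))).
    assert (fst v <= 0) by nra. lra.
  - intro e. rewrite (V (Hside_v (or_intror e))).
    assert (0 <= fst v) by nra. lra.
  - intro e. destruct (Req_dec (snd v) 0) as [h0|h0].
    + rewrite H' by (intros [hh _]; exact (hh h0)). lra.
    + rewrite (H (Hside_h h0 (or_introl e))). assert (snd v <= 0) by nra. lra.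
  - intro e. destruct (Req_dec (snd v) 0) as [h0|h0].
    + rewrite H' by (intros [hh _]; exact (hh h0)). lra.
    + rewrite (H (Hside_h h0 (or_intror e))). assert (0 <= snd v) by nra. lra.
  - exact (hit_point_on_grid n y v Hy Hh).
  - destruct Hh as [hh|hv].
    + left. split; [|exact (proj2 hh)]. rewrite (H hh). intro e. apply (proj1 hh). lra.
    + right. split; [|exact (proj2 hv)]. rewrite (V hv). intro e. apply (proj1 hv). lra.
Qed.

Lemma billiard_step n x v : billiard_state n x v ->
  exists y w, step a n (x, v) (y, w) /\ billiard_state n y w.
Proof.
  intros Hs.
  destruct (first_hit_time n x v Hs) as [t [Ht [Hh [Hfirst [Hy1 Hy2]]]]].
  pose proof (reflected_reflect_dir a n v (move x v t)) as Hrefl.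
  exists (move x v t), (reflect_dir a n v (move x v t)). split.
  - exists t. repeat (split; [assumption || reflexivity|]). split; [|exact Hrefl].
    exact (admissible_not_pcorner n _ v (admissible_move x v t (bs_admissible _ _ _ Hs))).
  - exact (billiard_state_after_hit n x v t _ Hs Ht Hh Hy1 Hy2 Hrefl).
Qed.

Lemma billiard_step_closed n s s' : billiard_state n (fst s) (snd s) -> step a n s s' ->
  billiard_state n (fst s') (snd s').
Proof.
  destruct s as [x v]. intros Hs Hstep.
  destruct (billiard_step n x v Hs) as [y [w [Hstep' Hs']]].
  rewrite (step_functional a n _ _ _ Hstep Hstep'). exact Hs'.
Qed.

Lemma billiard_step_injective n x v x' v' y w :
  billiard_state n x v -> billiard_state n x' v' ->
  step a n (x, v) (y, w) -> step a n (x', v') (y, w) -> x = x' /\ v = v'.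
Proof.
  intros Hs Hs' [t [Ht [_ [Hfirst [Ey [_ Hrefl]]]]]] [t' [Ht' [_ [Hfirst' [Ey' [_ Hrefl']]]]]].
  destruct (admissible_dir x v (bs_admissible _ _ _ Hs)) as [Hv1 Hv2].
  destruct (admissible_dir x' v' (bs_admissible _ _ _ Hs')) as [Hv1' Hv2'].
  assert (Ev : v = v').
  { apply (reflected_injective a n v v' y w); auto. rewrite Hv2, Hv2'. tauto. }
  subst v'. rewrite Ey in Ey'.
  assert (Et : t = t').
  { destruct (Rtotal_order t t') as [h|[h|h]]; [exfalso | exact h | exfalso].
    - apply (Hfirst' (t' - t)); [lra|]. unfold hits.
      rewrite <- (move_shift x x' v t t' Ey'). exact (bs_wall _ _ _ Hs).
    - apply (Hfirst (t - t')); [lra|]. unfold hits.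
      rewrite <- (move_shift x' x v t' t (eq_sym Ey')). exact (bs_wall _ _ _ Hs'). }
  subst t'. split; [|reflexivity].
  rewrite (move_shift x x' v t t Ey'), Rminus_diag. apply move_0.
Qed.

Definition grid_states : list state :=
  flat_map (fun i => flat_map (fun j =>
    map (fun e => ((INR i / INR grid, INR j / INR grid), (IZR (fst e), IZR (snd e) * slope)))
      [(1, 1); (1, -1); (-1, 1); (-1, -1)]%Z)
    (seq 0 (S grid))) (seq 0 (S grid)).

Lemma grid_coord_index (c : R) (z : Z) : 0 <= c <= 1 -> c * INR grid = IZR z ->
  exists i, (i < S grid)%nat /\ c = INR i / INR grid.
Proof.
  intros Hc Hz. pose proof grid_pos.
  assert (Hz0 : (0 <= z)%Z) by (apply le_IZR; rewrite <- Hz; nra).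
  assert (Hz1 : (z <= Z.of_nat grid)%Z) by (apply le_IZR; rewrite <- Hz, <- INR_IZR_INZ; nra).
  exists (Z.to_nat z). split; [lia|].
  rewrite INR_IZR_INZ, Z2Nat.id by lia. rewrite <- Hz. field. lra.
Qed.

Lemma billiard_state_in_grid_states n x v : billiard_state n x v -> In (x, v) grid_states.
Proof.
  intros [HO Hx1 Hx2 _ _ _ _ [z1 [z2 [Hz1 Hz2]]] _].
  destruct (grid_coord_index _ z1 Hx1 Hz1) as [i [hi ei]].
  destruct (grid_coord_index _ z2 Hx2 Hz2) as [j [hj ej]].
  apply in_flat_map. exists i. split; [apply in_seq; lia|].
  apply in_flat_map. exists j. split; [apply in_seq; lia|].
  destruct HO as [e1 [e2 [z [H1 [H2 [-> _]]]]]].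
  apply in_map_iff. exists (e1, e2). split.
  - destruct x as [x1 x2]. cbn [fst snd] in *. subst. reflexivity.
  - destruct H1 as [-> | ->]; destruct H2 as [-> | ->]; simpl; tauto.
Qed.

Lemma on_hwall_succ_iff n y v : admissible y v -> (n0 <= n)%nat ->
  (on_hwall a (S n) y <-> on_hwall a n y).
Proof.
  intros Hy Hn.
  split; (intros [h | [k [i [j [[h1 [h2 h3]] [h4 h5]]]]]]; [left; exact h|]).
  - destruct (le_lt_dec k n) as [hk|hk].
    + right. exists k, i, j. repeat split; tauto.
    + exfalso. apply (admissible_misses_deep_square k i j y v Hy ltac:(lia)); auto.
      pose proof (side_pos k). destruct h4 as [-> | ->]; lra.
  - right. exists k, i, j. repeat split; try lia; tauto.
Qed.

Lemma on_vwall_succ_iff n y v : admissible y v -> (n0 <= n)%nat ->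
  (on_vwall a (S n) y <-> on_vwall a n y).
Proof.
  intros Hy Hn.
  split; (intros [h | [k [i [j [[h1 [h2 h3]] [h4 h5]]]]]]; [left; exact h|]).
  - destruct (le_lt_dec k n) as [hk|hk].
    + right. exists k, i, j. repeat split; tauto.
    + exfalso. apply (admissible_misses_deep_square k i j y v Hy ltac:(lia)); auto.
      pose proof (side_pos k). destruct h4 as [-> | ->]; lra.
  - right. exists k, i, j. repeat split; try lia; tauto.
Qed.

Lemma step_succ_iff n x v s' : admissible x v -> (n0 <= n)%nat ->
  (step a (S n) (x, v) s' <-> step a n (x, v) s').
Proof.
  intros Hx Hn. destruct s' as [y w]. simpl.
  assert (Hwalls : forall t,
      (hhit a (S n) v (move x v t) <-> hhit a n v (move x v t)) /\
      (vhit a (S n) v (move x v t) <-> vhit a n v (move x v t))).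
  { intro t. pose proof (admissible_move x v t Hx) as Hy. unfold hhit, vhit.
    rewrite (on_hwall_succ_iff n _ v Hy Hn), (on_vwall_succ_iff n _ v Hy Hn). tauto. }
  assert (Hhits : forall t, hits a (S n) x v t <-> hits a n x v t)
    by (intro t; unfold hits; destruct (Hwalls t) as [-> ->]; tauto).
  assert (Hrefl : forall t, reflected a (S n) v (move x v t) w <-> reflected a n v (move x v t) w)
    by (intro t; unfold reflected; destruct (Hwalls t) as [-> ->]; tauto).
  pose proof (fun t => admissible_not_pcorner (S n) _ v (admissible_move x v t Hx)) as Hc1.
  pose proof (fun t => admissible_not_pcorner n _ v (admissible_move x v t Hx)) as Hc.
  split; intros [t [Ht [Hh [Hfirst [-> [_ Hr]]]]]]; exists t.
  - split; [exact Ht|]. split; [apply Hhits; exact Hh|].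
    split; [intros t' ht'; rewrite <- Hhits; exact (Hfirst t' ht')|].
    split; [reflexivity|]. split; [apply Hc | apply Hrefl; exact Hr].
  - split; [exact Ht|]. split; [apply Hhits; exact Hh|].
    split; [intros t' ht'; rewrite Hhits; exact (Hfirst t' ht')|].
    split; [reflexivity|]. split; [apply Hc1 | apply Hrefl; exact Hr].
Qed.

Lemma good_sequence_of_billiard_state s :
  (forall n, billiard_state n (fst s) (snd s)) -> good_sequence a s.
Proof.
  intros Hs.
  set (I := fun n (s : state) => billiard_state n (fst s) (snd s)).
  assert (I_closed : forall n s s', I n s -> step a n s s' -> I n s')
    by exact billiard_step_closed.
  apply (good_sequence_of_stable a s n0).
  - intro e. destruct (admissible_dir _ _ (bs_admissible _ _ _ (Hs 0%nat))) as [h _].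
    rewrite e in h. apply h. reflexivity.
  - intro n. destruct (bs_wall _ _ _ (Hs n)) as [[_ h] | [_ h]]; [left | right]; exact h.
  - intro n. apply (periodic_of_closed a n (I n) (I_closed n)) with (L := grid_states).
    + intros [x v] Hxv. destruct (billiard_step n x v Hxv) as [y [w [h _]]]. exists (y, w). exact h.
    + intros [x1 v1] [x2 v2] [y w] H1 H2 h1 h2.
      destruct (billiard_step_injective n x1 v1 x2 v2 y w H1 H2 h1 h2) as [-> ->]. reflexivity.
    + intros [x v] Hxv. exact (billiard_state_in_grid_states n x v Hxv).
    + exact (Hs n).
  - intros n Hn. apply (path_succ_eq a n (I n) (I_closed n)).
    + intros [x v] s' Hxv. exact (step_succ_iff n x v s' (bs_admissible _ _ _ Hxv) Hn).
    + exact (Hs n).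
Qed.

Lemma billiard_state_origin n : md = false -> billiard_state n (0, 0) (1, slope).
Proof.
  intros Hmd. pose proof slope_nonneg. constructor; cbn [fst snd]; try lra.
  - exists 1%Z, 1%Z, 0%Z. split; [left; reflexivity|]. split; [left; reflexivity|].
    split; [f_equal; simpl; ring|]. split; [rewrite Hmd; reflexivity|].
    unfold line_index. cbn [fst snd]. ring.
  - exists 0%Z, 0%Z. split; simpl; ring.
  - right. split; [cbn; lra|]. left. cbn [fst snd]. split; [left; reflexivity | lra].
Qed.

Lemma billiard_state_bottom n r : md = true -> Nat.odd p = true -> Nat.odd r = true ->
  (0 < r)%nat -> (r < 2 * a ^ n0)%nat ->
  billiard_state n (INR r / (2 * INR a ^ n0), 0) (1, slope).
Proof.
  intros Hmd Hp Hr Hr0 Hr1.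
  assert (HA : 0 < INR a ^ n0) by exact (pow_lt _ n0 INR_a_pos).
  assert (Hp0 : (0 < p)%nat) by (destruct p; [discriminate | apply Nat.lt_0_succ]).
  assert (Hslope : 0 < slope)
    by (apply Rdiv_lt_0_compat; [exact (lt_0_INR _ Hp0) | exact INR_q_pos]).
  assert (HrR : 0 < INR r) by exact (lt_0_INR _ Hr0).
  assert (Hr1R : INR r < 2 * INR a ^ n0).
  { rewrite <- pow_INR. replace 2 with (INR 2) by reflexivity. rewrite <- mult_INR.
    apply lt_INR. exact Hr1. }
  assert (Hx : 0 < INR r / (2 * INR a ^ n0) < 1).
  { split; [apply Rdiv_lt_0_compat; lra|].
    apply (Rmult_lt_reg_r (2 * INR a ^ n0)); [lra|]. field_simplify; lra. }
  constructor; cbn [fst snd]; try lra.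
  - exists 1%Z, 1%Z, (- (Z.of_nat p * Z.of_nat r))%Z.
    split; [left; reflexivity|]. split; [left; reflexivity|]. split; [f_equal; simpl; ring|].
    split.
    + rewrite Z.odd_opp, Z.odd_mul, !Z_odd_of_nat, Hp, Hr, Hmd. reflexivity.
    + unfold line_index, slope. cbn [fst snd]. rewrite opp_IZR, mult_IZR, <- !INR_IZR_INZ.
      field. pose proof INR_q_pos. lra.
  - exists (Z.of_nat (Nat.max p 1 * q * r)), 0%Z. split; [|simpl; ring].
    cbn [fst]. rewrite <- INR_IZR_INZ, !mult_INR, INR_grid. field. lra.
  - left. split; [cbn; lra|]. left. cbn [fst snd]. split; [left; reflexivity | lra].
Qed.

End LatticeLine.

Theorem theorem4p2 :
  forall (a : nat), (3 <= a)%nat -> Nat.odd a = true ->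
  forall al : R, inA a al \/ inB a al ->
    (inA (a - 2) al -> good_sequence a ((0, 0), (1, al))) /\
    (inB a al -> forall n0 r : nat, (1 <= n0)%nat -> Nat.odd r = true -> (0 < r)%nat ->
       (r < 2 * a ^ n0)%nat ->
       good_sequence a ((INR r / (2 * INR a ^ n0), 0), (1, al))).
Proof.
  intros a Ha Hao al _. split.
  - intros HA.
    assert (exists p q, al = slope p q /\ (1 <= q)%nat /\ (p + q < a)%nat /\
                        Nat.odd (p + q) = true) as [p [q [-> [Hq [Hpq Hodd]]]]].
    { unfold inA in HA. destruct (Nat.eqb (a - 2) 1) eqn:E.
      - apply Nat.eqb_eq in E. exists 0%nat, 1%nat. rewrite HA.
        repeat split; [unfold slope, Rdiv; simpl; ring | lia | lia].
      - destruct HA as [p [q [h1 [h2 [h3 [h4 ->]]]]]]. exists p, q. repeat split; auto; lia. }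
    apply (good_sequence_of_billiard_state a p q 0 false); auto.
    intro n. apply (billiard_state_origin a p q 0 false); auto.
  - intros HB n0 r _ Hr Hr0 Hr1.
    destruct HB as [p [q [Hp1 [Hq1 [Hpq [_ [_ [Hp [Hq ->]]]]]]]]].
    assert (Hparity : Nat.odd (p + q) = negb true) by (rewrite Nat.odd_add, Hp, Hq; reflexivity).
    apply (good_sequence_of_billiard_state a p q n0 true); auto; [lia|].
    intro n. apply (billiard_state_bottom a p q n0 true); auto; lia.
Qed.
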